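(* Let $G=(A\cup B,E)$ be a bipartite graph containing distinct vertices $a_1,a_2,a_3,a_4\in A$ and distinct $b_1,b_2\in B$ with $a_1b_1\in E$, $a_2b_1\notin E$, $a_2b_2\in E$, $a_3b_1\in E$, $a_3b_2\notin E$, $a_4b_2\in E$ (the adjacencies $a_1b_2$ and $a_4b_1$ being arbitrary). Then there exists an ordering $\sigma_A$ of $A$ such that $G$ admits no Stick representation in which, ordering the horizontal segments by where they touch the ground line from left to right, the $i$th horizontal segment corresponds to the $i$th vertex of $\sigma_A$.
   Context: A Stick representation of a bipartite graph $G=(A\cup B,E)$ (with $A$ horizontal and $B$ vertical) assigns to each vertex of $A$ a horizontal segment and to each vertex of $B$ a vertical segment such that the left endpoints of all horizontal segments and the bottom endpoints of all vertical segments lie on a fixed ground line $\ell$ of slope $-1$, and a horizontal and a vertical segment intersect if and only if the corresponding vertices are adjacent in $G$. *)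

From HB Require Import structures.
From mathcomp Require Import all_boot all_order all_algebra.
From mathcomp Require Import reals.
Set Implicit Arguments. Unset Strict Implicit. Unset Printing Implicit Defensive.
Import Order.TTheory GRing.Theory Num.Theory.
Local Open Scope ring_scope.

(* The ground line l is the line y = -x (slope -1); the point of l with
   abscissa t is (t, -t). *)
Definition on_hseg (R : realType) (xa la : R) (p : R * R) : Prop :=
  p.2 = - xa /\ xa <= p.1 /\ p.1 <= xa + la.

Definition on_vseg (R : realType) (xb lb : R) (p : R * R) : Prop :=
  p.1 = xb /\ - xb <= p.2 /\ p.2 <= - xb + lb.

Definition segs_intersect (R : realType) (xa la xb lb : R) : Prop :=
  exists p : R * R, on_hseg xa la p /\ on_vseg xb lb p.

Definition stick_rep (R : realType) (A B : finType) (E : A -> B -> bool)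
  (xA lA : A -> R) (xB lB : B -> R) : Prop :=
  (forall a, 0 < lA a) /\ (forall b, 0 < lB b) /\
  (forall a b, E a b <-> segs_intersect (xA a) (lA a) (xB b) (lB b)).

Definition ordering (A : finType) (s : seq A) : Prop :=
  perm_eq s (enum A).

Definition respects_order (R : realType) (A : finType) (s : seq A)
  (xA : A -> R) : Prop :=
  sorted (fun u v : R => u < v) [seq xA a | a <- s].

From HB Require Import structures.
From mathcomp Require Import all_boot all_order all_algebra.
From mathcomp Require Import reals.
From mathcomp Require Import lra.
Import Order.TTheory GRing.Theory Num.Theory.
Local Open Scope ring_scope.

(* Take any ordering starting with a1, a2, a3, a4.  Since a1 and a3 both meet
   b1 and their left endpoints enclose that of a2, the stick b1 reaches the
   height of a2, so a2 misses b1 only because a2 ends before b1; likewise a3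
   ends before b2.  Then b2 <= end(a2) < b1 <= end(a3) < b2, a contradiction. *)

Lemma segs_intersectP (R : realType) (xa la xb lb : R) :
  segs_intersect xa la xb lb <-> [/\ xa <= xb, xb <= xa + la & xb - lb <= xa].
Proof.
split=> [[[p1 p2]] [[/= ? [? ?]] [/= ? [? ?]]] | [? ? ?]]; first by subst; split; lra.
by exists (xb, - xa); rewrite /on_hseg /on_vseg /=; lra.
Qed.

Lemma segs_intersect_reach (R : realType) (xa la xb lb : R) :
  xa <= xb -> xb - lb <= xa -> segs_intersect xa la xb lb <-> xb <= xa + la.
Proof. by move=> ? ?; rewrite segs_intersectP; split=> [[]|] //. Qed.

Lemma stick_rep_not_increasing {R : realType} {A B : finType} {E : A -> B -> bool}
  {xA lA : A -> R} {xB lB : B -> R} {a1 a2 a3 a4 : A} {b1 b2 : B} :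
  stick_rep E xA lA xB lB ->
  E a1 b1 -> ~~ E a2 b1 -> E a2 b2 -> E a3 b1 -> ~~ E a3 b2 -> E a4 b2 ->
  ~ [/\ xA a1 < xA a2, xA a2 < xA a3 & xA a3 < xA a4].
Proof.
case=> _ [_ hE] e11 e21 e22 e31 e32 e42 [lt12 lt23 lt34].
have /segs_intersectP[? ? ?] := (hE a1 b1).1 e11.
have /segs_intersectP[? ? ?] := (hE a2 b2).1 e22.
have /segs_intersectP[? ? ?] := (hE a3 b1).1 e31.
have /segs_intersectP[? ? ?] := (hE a4 b2).1 e42.
have a2_ends_before_b1 : xA a2 + lA a2 < xB b1.
  rewrite ltNge; apply: contraNN e21 => ?.
  by apply/hE/segs_intersect_reach => //; lra.
have a3_ends_before_b2 : xA a3 + lA a3 < xB b2.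
  rewrite ltNge; apply: contraNN e32 => ?.
  by apply/hE/segs_intersect_reach => //; lra.
lra.
Qed.

Lemma ordering_cat_rest (A : finType) (s : seq A) :
  uniq s -> ordering (s ++ [seq x <- enum A | x \notin s]).
Proof.
move=> s_uniq; apply: uniq_perm.
- rewrite cat_uniq s_uniq filter_uniq ?enum_uniq // andbT.
  by apply/hasPn => x; rewrite mem_filter => /andP[].
- exact: enum_uniq.
- by move=> x; rewrite mem_cat mem_filter mem_enum andbT orbN.
Qed.

Lemma respects_order_catl {R : realType} {A : finType} {s t : seq A}
  {xA : A -> R} :
  respects_order (s ++ t) xA -> respects_order s xA.
Proof. by rewrite /respects_order map_cat => /cat_sorted2[]. Qed.

Theorem mainTheorem7 (R : realType) (A B : finType) (E : A -> B -> bool)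
  (a1 a2 a3 a4 : A) (b1 b2 : B) :
  uniq [:: a1; a2; a3; a4] -> b1 != b2 ->
  E a1 b1 -> ~~ E a2 b1 -> E a2 b2 -> E a3 b1 -> ~~ E a3 b2 -> E a4 b2 ->
  exists sigmaA : seq A, ordering sigmaA /\
    ~ (exists (xA lA : A -> R) (xB lB : B -> R),
         stick_rep E xA lA xB lB /\ respects_order sigmaA xA).
Proof.
move=> a_uniq _ e11 e21 e22 e31 e32 e42.
set s := [:: a1; a2; a3; a4].
exists (s ++ [seq x <- enum A | x \notin s]); split; first exact: ordering_cat_rest.
case=> xA [lA [xB [lB [rep /respects_order_catl /and4P[lt12 lt23 lt34 _]]]]].
by apply: (stick_rep_not_increasing rep e11 e21 e22 e31 e32 e42).
Qed.
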